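(* Let $g$ be an even $C^1$ function near $0\in\mathbb{C}$ which is homogeneous of degree $m>1$ (i.e. $g(tz)=t^m g(z)$ for all $t>0$), and suppose $g$ satisfies the polynomial condition with respect to an odd polynomial $p=p_{2s-1}+p_{2s+1}+\cdots+p_{2n-1}$, where each $p_k$ is a homogeneous holomorphic polynomial of degree $k$ and $p_{2s-1}\neq 0$. Then $p_{2s-1}$ is complex-symmetric, and $$\operatorname{Im}\Bigl(\frac{\partial p_{2s-1}}{\partial\zeta_2}(z,\bar z)\cdot g(z)\Bigr)\ge 0\quad\text{for all } z\in\Gamma,$$ where $\Gamma$ is the unit circle.
   Context: Polynomial condition: let $g$ be an even $C^1$ function defined near $0\in\mathbb{C}$ with $g(z)=o(z)$ as $z\to0$. We say $g$ satisfies the polynomial condition with respect to a holomorphic polynomial $p(\zeta_1,\zeta_2)$ if for every $C^1$ function $R$ defined near $0$ with $R(z)=o(g(z))$ as $z\to0$, both $\operatorname{Im} p(z,\bar z+g(z)+R(z))>0$ and $\operatorname{Im} p(z,\bar z-g(z)+R(z))<0$ hold for all $z\neq0$ sufficiently close to $0$. A homogeneous polynomial $q(\zeta_1,\zeta_2)=\sum_{k=0}^{d}a_k\zeta_1^k\zeta_2^{d-k}$ of degree $d$ is called complex-symmetric if $a_k=\overline{a_{d-k}}$ for all $k=0,\dots,d$ (equivalently, $q(z,\bar z)$ is real for all $z\in\mathbb{C}$). *)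

From Stdlib Require Import Reals.
From Coquelicot Require Import Coquelicot.
Open Scope R_scope.

Fixpoint Csum (n : nat) (f : nat -> C) : C :=
  match n with
  | O => RtoC 0
  | S n' => Cplus (Csum n' f) (f n')
  end.

Definition homp (d : nat) (a : nat -> C) (z1 z2 : C) : C :=
  Csum (S d) (fun k => Cmult (Cmult (a k) (Cpow z1 k)) (Cpow z2 (d - k)%nat)).

(* Its partial derivative with respect to the second variable:
   dq/dz2 (z1,z2) = sum_{k=0}^{d-1} (d-k) a_k z1^k z2^(d-k-1). *)
Definition homp_d2 (d : nat) (a : nat -> C) (z1 z2 : C) : C :=
  Csum d (fun k => Cmult (Cmult (Cmult (RtoC (INR (d - k)%nat)) (a k)) (Cpow z1 k))
                         (Cpow z2 (d - k - 1)%nat)).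

Definition complex_symmetric (d : nat) (a : nat -> C) : Prop :=
  forall k : nat, (k <= d)%nat -> a k = Cconj (a (d - k)%nat).

(* Odd polynomial p = p_{2s-1} + p_{2s+1} + ... + p_{2n-1}, where p_{2j-1} is the
   homogeneous polynomial of degree 2j-1 with coefficients c j. *)
Definition oddpoly (s n : nat) (c : nat -> nat -> C) (z1 z2 : C) : C :=
  Csum (S n - s)%nat (fun i => homp (2 * (s + i) - 1)%nat (c (s + i)%nat) z1 z2).

(* f is C^1 (in the real sense, C = R^2) on a neighbourhood of 0: on some disc
   |z| < r it is real-differentiable with differential
   h |-> Re h * fx z + Im h * fy z, and the partial derivatives fx, fy are
   continuous there. *)
Definition C1_near0 (f : C -> C) : Prop :=
  exists r : R, 0 < r /\ exists fx fy : C -> C,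
    forall z : C, Cmod z < r ->
      (forall eps : R, 0 < eps -> exists delta : R, 0 < delta /\
         forall h : C, Cmod h < delta ->
           Cmod (Cminus (Cminus (f (Cplus z h)) (f z))
                        (Cplus (Cmult (RtoC (Re h)) (fx z)) (Cmult (RtoC (Im h)) (fy z))))
           <= eps * Cmod h) /\
      (forall eps : R, 0 < eps -> exists delta : R, 0 < delta /\
         forall w : C, Cmod (Cminus w z) < delta ->
           Cmod (Cminus (fx w) (fx z)) < eps /\ Cmod (Cminus (fy w) (fy z)) < eps).

Definition little_o0 (f h : C -> C) : Prop :=
  forall eps : R, 0 < eps -> exists delta : R, 0 < delta /\
    forall z : C, 0 < Cmod z < delta -> Cmod (f z) <= eps * Cmod (h z).

Definition even_fun (g : C -> C) : Prop := forall z : C, g (Copp z) = g z.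

Definition homogeneous_deg (g : C -> C) (m : R) : Prop :=
  forall (t : R) (z : C), 0 < t -> g (Cmult (RtoC t) z) = Cmult (RtoC (Rpower t m)) (g z).

Definition polynomial_condition (g : C -> C) (p : C -> C -> C) : Prop :=
  little_o0 g (fun z => z) /\
  forall Rf : C -> C, C1_near0 Rf -> little_o0 Rf g ->
    exists delta : R, 0 < delta /\
      forall z : C, 0 < Cmod z < delta ->
        0 < Im (p z (Cplus (Cplus (Cconj z) (g z)) (Rf z))) /\
        Im (p z (Cplus (Cminus (Cconj z) (g z)) (Rf z))) < 0.

From Stdlib Require Import Reals Lra Lia.
From Coquelicot Require Import Coquelicot.
Open Scope R_scope.

(* Fix |z| = 1, write w = g(z) and
   eps = t^(m-1), so that g(t z) = t eps w by homogeneity.  Along the ray through (z, conj z),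
   t^(1-2s) p(t z, t (conj z + h)) = p_(2s-1)(z, conj z) + h dp_(2s-1)/dz2 (z, conj z)
   + O(|h| (t^2 + |h|)) + O(t^2), and the polynomial condition makes its imaginary part
   positive at h = eps w and negative at h = - eps w for small t.  As t -> 0 (hence eps -> 0,
   since m > 1) both signs squeeze Im p_(2s-1)(z, conj z) to 0; subtracting the two
   inequalities and dividing by eps gives 2 Im (dp_(2s-1)/dz2 (z, conj z) w) + O(t^2 + eps) > 0.
   A homogeneous q that is real on the unit circle is complex-symmetric: at z = e^(i x/2),
   q(z, conj z) - conj q(z, conj z) is, up to a unit factor, the trigonometric polynomial
   sum_k (a_k - conj a_(d-k)) e^(i k x), whose coefficients vanish by orthogonality of the
   (d+1)-st roots of unity. *)

Lemma Csum_ext N (f g : nat -> C) : (forall k, (k < N)%nat -> f k = g k) -> Csum N f = Csum N g.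
Proof.
induction N as [|N IH]; intros H; simpl; [reflexivity|].
rewrite IH, H; auto with arith.
Qed.

Lemma Csum_plus N (f g : nat -> C) :
  Csum N (fun k => f k + g k)%C = (Csum N f + Csum N g)%C.
Proof. induction N as [|N IH]; simpl; [ring|rewrite IH; ring]. Qed.

Lemma Csum_minus N (f g : nat -> C) :
  Csum N (fun k => f k - g k)%C = (Csum N f - Csum N g)%C.
Proof. induction N as [|N IH]; simpl; [ring|rewrite IH; ring]. Qed.

Lemma Csum_scal_l N (a : C) (f : nat -> C) : Csum N (fun k => a * f k)%C = (a * Csum N f)%C.
Proof. induction N as [|N IH]; simpl; [ring|rewrite IH; ring]. Qed.

Lemma Csum_S_l N (f : nat -> C) : Csum (S N) f = (f O + Csum N (fun k => f (S k)))%C.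
Proof.
induction N as [|N IH]; simpl in *; [ring|].
rewrite IH; ring.
Qed.

Lemma Csum_eq_0 N (f : nat -> C) : (forall k, (k < N)%nat -> f k = RtoC 0) -> Csum N f = RtoC 0.
Proof.
intros H; rewrite (Csum_ext _ _ (fun _ => RtoC 0)) by exact H; clear H.
induction N as [|N IH]; simpl; [reflexivity|rewrite IH; ring].
Qed.

Lemma Csum_conj N (f : nat -> C) : Cconj (Csum N f) = Csum N (fun k => Cconj (f k)).
Proof.
induction N as [|N IH]; simpl.
- apply injective_projections; simpl; lra.
- rewrite Cplus_conj, IH; reflexivity.
Qed.

Lemma Csum_rev d (f : nat -> C) : Csum (S d) f = Csum (S d) (fun k => f (d - k)%nat).
Proof.
induction d as [|d IH]; [reflexivity|].
rewrite (Csum_S_l (S d) (fun k => f (S d - k)%nat)), Nat.sub_0_r.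
change (Csum (S (S d)) f) with (Csum (S d) f + f (S d))%C.
rewrite IH, Cplus_comm; reflexivity.
Qed.

Lemma Csum_swap N M (f : nat -> nat -> C) :
  Csum N (fun j => Csum M (fun k => f j k)) = Csum M (fun k => Csum N (fun j => f j k)).
Proof.
induction N as [|N IH]; simpl.
- symmetry; apply Csum_eq_0; reflexivity.
- rewrite IH, <- Csum_plus; reflexivity.
Qed.

Lemma Csum_kronecker d l (v : C) : (l <= d)%nat ->
  Csum (S d) (fun k => if Nat.eqb k l then v else RtoC 0) = v.
Proof.
induction d as [|d IH]; intros Hl.
- replace l with O by lia; apply Cplus_0_l.
- change (Csum (S (S d)) ?f) with (Csum (S d) f + f (S d))%C; cbv beta.
  destruct (Nat.eqb_spec (S d) l) as [<-|Hne].
  + rewrite Csum_eq_0; [ring|].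
    intros k Hk; destruct (Nat.eqb_spec k (S d)); [lia|reflexivity].
  + rewrite IH by lia; ring.
Qed.

Lemma Rabs_Im_le_Cmod (z : C) : Rabs (Im z) <= Cmod z.
Proof. eapply Rle_trans; [apply Rmax_r|apply Rmax_Cmod]. Qed.

Lemma Im_minus (a b : C) : Im (a - b)%C = Im a - Im b.
Proof. reflexivity. Qed.

Definition dominated_on {X : Type} (P : X -> Prop) (f : X -> C) (phi : X -> R) : Prop :=
  exists K, 0 <= K /\ forall x, P x -> Cmod (f x) <= K * phi x.

Lemma dominated_on_scal {X : Type} (P : X -> Prop) f phi (a : C) :
  dominated_on P f phi -> dominated_on P (fun x => a * f x)%C phi.
Proof.
intros [K [HK Hf]]; exists (Cmod a * K); split.
- apply Rmult_le_pos; [apply Cmod_ge_0|exact HK].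
- intros x Hx; rewrite Cmod_mult, Rmult_assoc.
  apply Rmult_le_compat_l; [apply Cmod_ge_0|auto].
Qed.

Lemma Csum_weighted_dominated {X : Type} (P : X -> Prop) phi N (f : nat -> X -> C) :
  (forall k, (k < N)%nat -> dominated_on P (f k) phi) ->
  exists K, 0 <= K /\ forall (w : nat -> C) x, (forall k, Cmod (w k) <= 1) -> P x ->
    Cmod (Csum N (fun k => w k * f k x)%C) <= K * phi x.
Proof.
induction N as [|N IH]; intros Hf.
- exists 0; split; [lra|]; intros w x _ _; simpl; rewrite Cmod_0; lra.
- destruct IH as [K [HK Hsum]]; [intros k Hk; apply Hf; lia|].
  destruct (Hf N) as [KN [HKN HN]]; [lia|].
  exists (K + KN); split; [lra|]; intros w x Hw Hx; simpl.
  eapply Rle_trans; [apply Cmod_triangle|]; rewrite Cmod_mult.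
  assert (Cmod (w N) * Cmod (f N x) <= KN * phi x).
  { eapply Rle_trans; [apply Rmult_le_compat_r; [apply Cmod_ge_0|apply Hw]|].
    rewrite Rmult_1_l; auto. }
  specialize (Hsum w x Hw Hx); lra.
Qed.

Lemma Cpow_taylor (z : C) (M : R) n : 0 <= M ->
  dominated_on (fun h => Cmod h <= M)
    (fun h => (z + h) ^ n - z ^ n - INR n * h * z ^ (n - 1))%C (fun h => Cmod h ^ 2).
Proof.
intros HM; induction n as [|n [K [HK IH]]].
- exists 0; split; [lra|]; intros h _.
  replace ((z + h) ^ 0 - z ^ 0 - INR 0 * h * z ^ (0 - 1))%C with (RtoC 0) by (simpl; ring).
  rewrite Cmod_0; lra.
- assert (Hz := Cmod_ge_0 z); assert (Hn := pos_INR n).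
  assert (Hzn : 0 <= Cmod z ^ (n - 1)) by (apply pow_le; exact Hz).
  exists ((Cmod z + M) * K + INR n * Cmod z ^ (n - 1)); split; [nra|].
  intros h Hh.
  assert (Hrec : ((z + h) ^ S n - z ^ S n - INR (S n) * h * z ^ (S n - 1) =
    (z + h) * ((z + h) ^ n - z ^ n - INR n * h * z ^ (n - 1)) + INR n * (h * h) * z ^ (n - 1))%C).
  { destruct n as [|n]; [simpl; ring|].
    replace (S (S n) - 1)%nat with (S n) by lia; replace (S n - 1)%nat with n by lia.
    rewrite !Cpow_S, (S_INR (S n)), RtoC_plus; ring. }
  rewrite Hrec; eapply Rle_trans; [apply Cmod_triangle|].
  rewrite !Cmod_mult, Cmod_R, Cmod_pow, Rabs_right by (apply Rle_ge, pos_INR).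
  assert (Hzh : Cmod (z + h) <= Cmod z + M) by (eapply Rle_trans; [apply Cmod_triangle|lra]).
  specialize (IH h Hh).
  assert (Cmod (z + h) * Cmod ((z + h) ^ n - z ^ n - INR n * h * z ^ (n - 1))%C
          <= (Cmod z + M) * (K * Cmod h ^ 2))
    by (apply Rmult_le_compat; auto using Cmod_ge_0).
  replace (Cmod h ^ 2) with (Cmod h * Cmod h) in * by ring; lra.
Qed.

Lemma homp_d2_full d a z1 z2 : homp_d2 d a z1 z2 =
  Csum (S d) (fun k => INR (d - k) * a k * z1 ^ k * z2 ^ (d - k - 1))%C.
Proof. unfold homp_d2; simpl; rewrite Nat.sub_diag; simpl; ring. Qed.

Lemma homp_taylor d a z1 z2 M : 0 <= M ->
  dominated_on (fun h => Cmod h <= M)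
    (fun h => homp d a z1 (z2 + h) - homp d a z1 z2 - h * homp_d2 d a z1 z2)%C
    (fun h => Cmod h ^ 2).
Proof.
intros HM.
destruct (Csum_weighted_dominated (fun h => Cmod h <= M) (fun h => Cmod h ^ 2) (S d)
  (fun k h => a k * z1 ^ k
     * ((z2 + h) ^ (d - k) - z2 ^ (d - k) - INR (d - k) * h * z2 ^ (d - k - 1)))%C)
  as [K [HK Hsum]].
{ intros k _; apply dominated_on_scal, Cpow_taylor, HM. }
exists K; split; [exact HK|]; intros h Hh.
eapply Rle_trans;
  [|apply (Hsum (fun _ => RtoC 1) h); [intros; cbv beta; rewrite Cmod_1; lra|exact Hh]].
right; f_equal.
unfold homp; rewrite homp_d2_full, <- Csum_scal_l, <- !Csum_minus.
apply Csum_ext; intros k _; ring.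
Qed.

Lemma homp_scale d a (t z1 z2 : C) :
  homp d a (t * z1) (t * z2) = (t ^ d * homp d a z1 z2)%C.
Proof.
unfold homp; rewrite <- Csum_scal_l; apply Csum_ext; intros k Hk.
rewrite !Cpow_mult_l; replace d with (k + (d - k))%nat at 3 by lia.
rewrite Cpow_add_r; ring.
Qed.

Definition oddpoly_ray (s N : nat) (c : nat -> nat -> C) (t : R) (z1 z2 : C) : C :=
  Csum (S N) (fun i => RtoC (t ^ (2 * i)) * homp (2 * (s + i) - 1) (c (s + i)%nat) z1 z2)%C.

Lemma oddpoly_scale s n c (t : R) z1 z2 : (1 <= s)%nat -> (s <= n)%nat ->
  oddpoly s n c (t * z1) (t * z2) = (RtoC (t ^ (2 * s - 1)) * oddpoly_ray s (n - s) c t z1 z2)%C.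
Proof.
intros Hs Hsn; unfold oddpoly, oddpoly_ray.
replace (S n - s)%nat with (S (n - s)) by lia.
rewrite <- Csum_scal_l; apply Csum_ext; intros i _.
rewrite homp_scale, <- RtoC_pow.
replace (2 * (s + i) - 1)%nat with (2 * s - 1 + 2 * i)%nat at 1 by lia.
rewrite pow_add, RtoC_mult; ring.
Qed.

Lemma Rpow_le_1 t n : 0 <= t <= 1 -> 0 <= t ^ n <= 1.
Proof. intros Ht; split; [apply pow_le; lra|rewrite <- (pow1 n); apply pow_incr; lra]. Qed.

Lemma Csum_even_powers_tail N (y : nat -> C) :
  exists K, 0 <= K /\ forall t, 0 <= t <= 1 ->
    Cmod (Csum (S N) (fun i => RtoC (t ^ (2 * i)) * y i)%C - y O) <= K * t ^ 2.
Proof.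
destruct (Csum_weighted_dominated (fun t : R => 0 <= t <= 1) (fun _ => 1) N (fun i _ => y (S i)))
  as [K [HK Hsum]].
{ intros i _; exists (Cmod (y (S i))); split; [apply Cmod_ge_0|intros; lra]. }
exists K; split; [exact HK|]; intros t Ht.
rewrite Csum_S_l.
replace (_ - _)%C with (RtoC (t ^ 2) * Csum N (fun i => RtoC (t ^ (2 * i)) * y (S i)))%C.
2:{ rewrite <- Csum_scal_l, (Csum_ext _ _ (fun i => RtoC (t ^ (2 * S i)) * y (S i))%C).
    - rewrite Nat.mul_0_r, pow_O; ring.
    - intros i _; rewrite Cmult_assoc, <- RtoC_mult, <- pow_add.
      do 3 f_equal; lia. }
rewrite Cmod_mult, Cmod_R, Rabs_right by (apply Rle_ge, pow_le; lra).
rewrite Rmult_comm; apply Rmult_le_compat_r; [apply pow_le; lra|].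
rewrite <- (Rmult_1_r K).
apply (Hsum (fun i => RtoC (t ^ (2 * i))) t); [|exact Ht].
intros i; pose proof (Rpow_le_1 t (2 * i) Ht); rewrite Cmod_R, Rabs_right; lra.
Qed.

Lemma oddpoly_ray_taylor s N c z1 u M : 0 <= M ->
  exists K, 0 <= K /\ forall t h, 0 <= t <= 1 -> Cmod h <= M ->
    Cmod (oddpoly_ray s N c t z1 (u + h) - oddpoly_ray s N c t z1 u
          - h * homp_d2 (2 * s - 1) (c s) z1 u)%C <= K * (Cmod h * (t ^ 2 + Cmod h)).
Proof.
intros HM.
set (q i := homp (2 * (s + i) - 1) (c (s + i)%nat) z1).
set (dq i := homp_d2 (2 * (s + i) - 1) (c (s + i)%nat) z1).
destruct (Csum_weighted_dominated (fun h => Cmod h <= M) (fun h => Cmod h ^ 2) (S N)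
  (fun i h => q i (u + h) - q i u - h * dq i u)%C) as [K1 [HK1 Hquad]].
{ intros i _; apply homp_taylor, HM. }
destruct (Csum_even_powers_tail N (fun i => dq i u)) as [K2 [HK2 Htail]].
exists (K1 + K2); split; [lra|]; intros t h Ht Hh.
specialize (Hquad (fun i => RtoC (t ^ (2 * i))) h).
specialize (Htail t Ht); unfold dq in Htail; rewrite Nat.add_0_r in Htail; fold dq in Htail.
assert (Hsplit : (oddpoly_ray s N c t z1 (u + h) - oddpoly_ray s N c t z1 u =
    Csum (S N) (fun i => RtoC (t ^ (2 * i)) * (q i (u + h) - q i u - h * dq i u))
    + h * Csum (S N) (fun i => RtoC (t ^ (2 * i)) * dq i u))%C).
{ unfold oddpoly_ray; rewrite <- Csum_scal_l, <- Csum_plus, <- Csum_minus.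
  apply Csum_ext; intros i _; unfold q, dq; ring. }
rewrite Hsplit.
replace (_ - _)%C with
  (Csum (S N) (fun i => RtoC (t ^ (2 * i)) * (q i (u + h) - q i u - h * dq i u))
  + h * (Csum (S N) (fun i => RtoC (t ^ (2 * i)) * dq i u) - homp_d2 (2 * s - 1) (c s) z1 u))%C
  by ring.
eapply Rle_trans; [apply Cmod_triangle|]; rewrite Cmod_mult.
assert (Hh0 := Cmod_ge_0 h); assert (Ht2 : 0 <= t ^ 2) by (apply pow_le; lra).
assert (Hq : Cmod (Csum (S N) (fun i => RtoC (t ^ (2 * i)) * (q i (u + h) - q i u - h * dq i u)))%C
             <= K1 * Cmod h ^ 2).
{ apply Hquad; [|exact Hh].
  intros i; pose proof (Rpow_le_1 t (2 * i) Ht); rewrite Cmod_R, Rabs_right; lra. }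
assert (Cmod h * Cmod (Csum (S N) (fun i => RtoC (t ^ (2 * i)) * dq i u)
                         - homp_d2 (2 * s - 1) (c s) z1 u)%C
        <= Cmod h * (K2 * t ^ 2)) by (apply Rmult_le_compat_l; auto).
assert (0 <= K1 * (Cmod h * t ^ 2)) by (apply Rmult_le_pos; [|apply Rmult_le_pos]; auto).
assert (0 <= K2 * (Cmod h * Cmod h)) by (apply Rmult_le_pos; [|apply Rmult_le_pos]; auto).
replace (Cmod h ^ 2) with (Cmod h * Cmod h) in Hq by ring.
lra.
Qed.

Lemma oddpoly_ray_near_lead s N c z1 u M : 0 <= M ->
  exists K, 0 <= K /\ forall t h, 0 <= t <= 1 -> Cmod h <= M ->
    Cmod (oddpoly_ray s N c t z1 (u + h) - homp (2 * s - 1) (c s) z1 u)%C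
    <= K * (t ^ 2 + Cmod h).
Proof.
intros HM.
set (D0 := homp_d2 (2 * s - 1) (c s) z1 u).
destruct (oddpoly_ray_taylor s N c z1 u M HM) as [K1 [HK1 Htaylor]].
destruct (Csum_even_powers_tail N (fun i => homp (2 * (s + i) - 1) (c (s + i)%nat) z1 u))
  as [K2 [HK2 Htail]].
exists (K1 * (1 + M) + Cmod D0 + K2); split; [pose proof (Cmod_ge_0 D0); nra|].
intros t h Ht Hh.
specialize (Htaylor t h Ht Hh); specialize (Htail t Ht); rewrite Nat.add_0_r in Htail.
fold D0 in Htaylor; fold (oddpoly_ray s N c t z1 u) in Htail.
replace (_ - _)%C with (oddpoly_ray s N c t z1 (u + h) - oddpoly_ray s N c t z1 u - h * D0
  + h * D0 + (oddpoly_ray s N c t z1 u - homp (2 * s - 1) (c s) z1 u))%C by ring.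
eapply Rle_trans; [apply Cmod_triangle|]; eapply Rle_trans;
  [apply Rplus_le_compat_r, Cmod_triangle|]; rewrite Cmod_mult.
assert (Hh0 := Cmod_ge_0 h); assert (HD0 := Cmod_ge_0 D0).
assert (Ht2 : 0 <= t ^ 2 <= 1) by (apply Rpow_le_1; exact Ht).
assert (K1 * (Cmod h * (t ^ 2 + Cmod h)) <= K1 * (Cmod h * (1 + M)))
  by (apply Rmult_le_compat_l, Rmult_le_compat_l; lra).
assert (0 <= K1 * (1 + M) * t ^ 2) by (apply Rmult_le_pos; [apply Rmult_le_pos|]; lra).
assert (0 <= Cmod D0 * t ^ 2) by (apply Rmult_le_pos; lra).
assert (0 <= K2 * Cmod h) by (apply Rmult_le_pos; lra).
lra.
Qed.

Lemma oddpoly_ray_odd_part s N c z1 u M : 0 <= M ->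
  exists K, 0 <= K /\ forall t h, 0 <= t <= 1 -> Cmod h <= M ->
    Cmod (oddpoly_ray s N c t z1 (u + h) - oddpoly_ray s N c t z1 (u - h)
          - 2 * h * homp_d2 (2 * s - 1) (c s) z1 u)%C <= K * (Cmod h * (t ^ 2 + Cmod h)).
Proof.
intros HM.
destruct (oddpoly_ray_taylor s N c z1 u M HM) as [K [HK Htaylor]].
exists (2 * K); split; [lra|]; intros t h Ht Hh.
pose proof (Htaylor t h Ht Hh) as Eplus.
pose proof (Htaylor t (- h)%C Ht ltac:(rewrite Cmod_opp; exact Hh)) as Eminus.
rewrite Cmod_opp in Eminus.
set (G := oddpoly_ray s N c t z1) in *; set (D0 := homp_d2 (2 * s - 1) (c s) z1 u) in *.
replace (_ - _)%C with ((G (u + h) - G u - h * D0) - (G (u + - h) - G u - - h * D0))%C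
  by (unfold Cminus; ring).
unfold Cminus at 1; eapply Rle_trans; [apply Cmod_triangle|]; rewrite Cmod_opp; lra.
Qed.

Lemma C1_near0_0 : C1_near0 (fun _ => RtoC 0).
Proof.
exists 1; split; [lra|]; exists (fun _ => RtoC 0), (fun _ => RtoC 0); intros z _; split.
- intros eps Heps; exists 1; split; [lra|]; intros h _.
  replace (_ - _)%C with (RtoC 0) by ring; rewrite Cmod_0.
  apply Rmult_le_pos; [lra|apply Cmod_ge_0].
- intros eps Heps; exists 1; split; [lra|]; intros w _.
  replace (RtoC 0 - RtoC 0)%C with (RtoC 0) by ring; rewrite Cmod_0; lra.
Qed.

Lemma little_o0_0 (g : C -> C) : little_o0 (fun _ => RtoC 0) g.
Proof.
intros eps Heps; exists 1; split; [lra|]; intros z _; rewrite Cmod_0.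
apply Rmult_le_pos; [lra|apply Cmod_ge_0].
Qed.

Lemma polynomial_condition_ray (g : C -> C) m (p : C -> C -> C) z0 :
  homogeneous_deg g m -> polynomial_condition g p -> Cmod z0 = 1 ->
  exists delta, 0 < delta /\ forall t, 0 < t < delta ->
    0 < Im (p (t * z0) (t * (Cconj z0 + Rpower t (m - 1) * g z0)))%C /\
    Im (p (t * z0) (t * (Cconj z0 - Rpower t (m - 1) * g z0)))%C < 0.
Proof.
intros Hhom [_ Hpc] Hz0.
destruct (Hpc _ C1_near0_0 (little_o0_0 g)) as [delta [Hdelta Hsign]].
exists delta; split; [exact Hdelta|]; intros t Ht.
assert (Hgt : g (t * z0)%C = (t * (Rpower t (m - 1) * g z0))%C).
{ rewrite Hhom by lra.
  replace m with (1 + (m - 1)) at 1 by ring.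
  rewrite Rpower_plus, Rpower_1, RtoC_mult by lra; ring. }
destruct (Hsign (t * z0)%C) as [Hplus Hminus].
{ rewrite Cmod_mult, Cmod_R, Hz0, Rabs_right; lra. }
rewrite Hgt, Cmult_conj in Hplus, Hminus.
replace (Cconj t) with (RtoC t) in Hplus, Hminus
  by (apply injective_projections; simpl; lra).
split.
- replace (t * (Cconj z0 + Rpower t (m - 1) * g z0))%C
    with (t * Cconj z0 + t * (Rpower t (m - 1) * g z0) + 0)%C by ring; exact Hplus.
- replace (t * (Cconj z0 - Rpower t (m - 1) * g z0))%C
    with (t * Cconj z0 - t * (Rpower t (m - 1) * g z0) + 0)%C by ring; exact Hminus.
Qed.

Lemma oddpoly_ray_sign g m s n c z0 :
  homogeneous_deg g m -> (1 <= s)%nat -> (s <= n)%nat ->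
  polynomial_condition g (oddpoly s n c) -> Cmod z0 = 1 ->
  exists delta, 0 < delta /\ forall t, 0 < t < delta ->
    0 < Im (oddpoly_ray s (n - s) c t z0 (Cconj z0 + Rpower t (m - 1) * g z0))%C /\
    Im (oddpoly_ray s (n - s) c t z0 (Cconj z0 - Rpower t (m - 1) * g z0))%C < 0.
Proof.
intros Hhom Hs Hsn Hpc Hz0.
destruct (polynomial_condition_ray g m _ z0 Hhom Hpc Hz0) as [delta [Hdelta Hsign]].
exists delta; split; [exact Hdelta|]; intros t Ht.
destruct (Hsign t Ht) as [Hplus Hminus].
rewrite !oddpoly_scale, !im_scal_l in * by assumption.
assert (0 < t ^ (2 * s - 1)) by (apply pow_lt; lra).
split; nra.
Qed.

Lemma exists_small_ray_parameter m delta eta : 1 < m -> 0 < delta -> 0 < eta ->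
  exists t, 0 < t < delta /\ t < 1 /\ t < eta /\
    Rpower t (m - 1) < eta /\ Rpower t (m - 1) < 1.
Proof.
intros Hm Hdelta Heta.
set (eta' := Rmin eta 1).
assert (Heta' : 0 < eta') by (apply Rmin_pos; lra).
set (tau := Rpower eta' (/ (m - 1))).
assert (Htau : 0 < tau) by apply exp_pos.
set (t := Rmin (Rmin delta 1) (Rmin eta tau) / 2).
assert (Ht : 0 < t /\ t < delta /\ t < 1 /\ t < eta /\ t < tau).
{ assert (Hmin := Rmin_pos _ _ (Rmin_pos _ _ Hdelta Rlt_0_1) (Rmin_pos _ _ Heta Htau)).
  pose proof (Rmin_l (Rmin delta 1) (Rmin eta tau)).
  pose proof (Rmin_r (Rmin delta 1) (Rmin eta tau)).
  pose proof (Rmin_l delta 1); pose proof (Rmin_r delta 1).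
  pose proof (Rmin_l eta tau); pose proof (Rmin_r eta tau).
  unfold t; lra. }
assert (Hpow : Rpower t (m - 1) < eta').
{ replace eta' with (Rpower tau (m - 1)).
  - apply Rlt_Rpower_l; lra.
  - unfold tau; rewrite Rpower_mult, Rinv_l, Rpower_1 by lra; reflexivity. }
pose proof (Rmin_l eta 1); pose proof (Rmin_r eta 1).
exists t; repeat split; unfold eta' in *; lra.
Qed.

Lemma Rle_0_of_forall_le_mult (x K : R) : (forall eta, 0 < eta -> x <= K * eta) -> x <= 0.
Proof.
intros H; destruct (Rle_or_lt x 0) as [Hx|Hx]; [exact Hx|exfalso].
set (eta := x / (2 * (Rabs K + 1))).
assert (Hpos : 0 < Rabs K + 1) by (pose proof (Rabs_pos K); lra).
assert (Heta : 0 < eta) by (apply Rdiv_lt_0_compat; lra).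
assert (Hx2 : (Rabs K + 1) * eta = x / 2) by (unfold eta; field; lra).
assert (K * eta <= Rabs K * eta) by (apply Rmult_le_compat_r; [lra|apply Rle_abs]).
specialize (H eta Heta); nra.
Qed.

Lemma polynomial_condition_lead_real g m s n c z0 :
  homogeneous_deg g m -> 1 < m -> (1 <= s)%nat -> (s <= n)%nat ->
  polynomial_condition g (oddpoly s n c) -> Cmod z0 = 1 ->
  Im (homp (2 * s - 1) (c s) z0 (Cconj z0)) = 0.
Proof.
intros Hhom Hm Hs Hsn Hpc Hz0.
destruct (oddpoly_ray_sign g m s n c z0 Hhom Hs Hsn Hpc Hz0) as [delta [Hdelta Hsign]].
set (w := g z0) in *; set (M := Cmod w); assert (HM : 0 <= M) by apply Cmod_ge_0.
destruct (oddpoly_ray_near_lead s (n - s) c z0 (Cconj z0) M HM) as [K [HK Hnear]].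
set (G := oddpoly_ray s (n - s) c) in *.
set (P0 := homp (2 * s - 1) (c s) z0 (Cconj z0)) in *.
assert (Hbound : forall eta, 0 < eta -> Rabs (Im P0) <= K * (1 + M) * eta).
{ intros eta Heta.
  destruct (exists_small_ray_parameter m delta eta Hm Hdelta Heta)
    as [t [Ht [Ht1 [Hteta [Heps Heps1]]]]].
  set (eps := Rpower t (m - 1)) in *.
  assert (Hclose : forall h, Cmod h = eps * M ->
            - (K * (1 + M) * eta) <= Im (G t z0 (Cconj z0 + h)%C) - Im P0 <= K * (1 + M) * eta).
  { intros h Hh; apply Rabs_le_between; rewrite <- Im_minus.
    eapply Rle_trans; [apply Rabs_Im_le_Cmod|].
    eapply Rle_trans; [apply Hnear; [lra|rewrite Hh; nra]|].
    assert (t ^ 2 <= eta) by (simpl; nra).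
    rewrite Rmult_assoc; apply Rmult_le_compat_l; nra. }
  destruct (Hsign t Ht) as [Hplus Hminus]; fold eps in Hplus, Hminus; unfold Cminus in Hminus.
  assert (Hw : Cmod (eps * w)%C = eps * M)
    by (rewrite Cmod_mult, Cmod_R, Rabs_right; [reflexivity|apply Rle_ge, Rlt_le, exp_pos]).
  pose proof (Hclose _ Hw); pose proof (Hclose (- (eps * w))%C ltac:(rewrite Cmod_opp; exact Hw)).
  apply Rabs_le; lra. }
apply (Rle_0_of_forall_le_mult _ _) in Hbound; apply Rabs_le_between in Hbound; lra.
Qed.

Lemma polynomial_condition_lead_d2_Im_nonneg g m s n c z0 :
  homogeneous_deg g m -> 1 < m -> (1 <= s)%nat -> (s <= n)%nat ->
  polynomial_condition g (oddpoly s n c) -> Cmod z0 = 1 ->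
  0 <= Im (homp_d2 (2 * s - 1) (c s) z0 (Cconj z0) * g z0)%C.
Proof.
intros Hhom Hm Hs Hsn Hpc Hz0.
destruct (oddpoly_ray_sign g m s n c z0 Hhom Hs Hsn Hpc Hz0) as [delta [Hdelta Hsign]].
set (w := g z0) in *; set (M := Cmod w); assert (HM : 0 <= M) by apply Cmod_ge_0.
destruct (oddpoly_ray_odd_part s (n - s) c z0 (Cconj z0) M HM) as [K [HK Hodd]].
set (G := oddpoly_ray s (n - s) c) in *.
set (D0 := homp_d2 (2 * s - 1) (c s) z0 (Cconj z0)) in *.
enough (Hbound : forall eta, 0 < eta -> - Im (D0 * w)%C <= K * M * (1 + M) * eta)
  by (apply Rle_0_of_forall_le_mult in Hbound; lra).
intros eta Heta.
destruct (exists_small_ray_parameter m delta eta Hm Hdelta Heta)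
  as [t [Ht [Ht1 [Hteta [Heps Heps1]]]]].
set (eps := Rpower t (m - 1)) in *.
assert (Heps0 : 0 < eps) by apply exp_pos.
assert (Hw : Cmod (eps * w)%C = eps * M)
  by (rewrite Cmod_mult, Cmod_R, Rabs_right; [reflexivity|lra]).
destruct (Hsign t Ht) as [Hplus Hminus]; fold eps in Hplus, Hminus.
specialize (Hodd t (eps * w)%C ltac:(lra) ltac:(rewrite Hw; nra)); rewrite Hw in Hodd.
assert (Hlow : 0 < 2 * eps * Im (D0 * w)%C + K * (eps * M * (t ^ 2 + eps * M))).
{ replace (2 * eps * Im (D0 * w)%C) with (Im (2 * (eps * w) * D0)%C)
    by (replace (2 * (eps * w) * D0)%C with (RtoC (2 * eps) * (D0 * w))%C
          by (rewrite RtoC_mult; ring);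
        rewrite im_scal_l; reflexivity).
  pose proof (Rabs_Im_le_Cmod (G t z0 (Cconj z0 + eps * w) - G t z0 (Cconj z0 - eps * w)
                               - 2 * (eps * w) * D0)%C) as Him.
  rewrite !Im_minus in Him; apply Rabs_le_between in Him; lra. }
assert (Hpos : 0 < 2 * Im (D0 * w)%C + K * (M * (t ^ 2 + eps * M)))
  by (apply (Rmult_lt_reg_l eps); lra).
assert (Ht2 : t ^ 2 <= eta) by (simpl; nra).
assert (K * (M * (t ^ 2 + eps * M)) <= K * (M * ((1 + M) * eta)))
  by (apply Rmult_le_compat_l, Rmult_le_compat_l; nra).
assert (0 <= K * (M * ((1 + M) * eta)))
  by (apply Rmult_le_pos, Rmult_le_pos, Rmult_le_pos; lra).
lra.
Qed.

Definition cis (x : R) : C := (cos x, sin x).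

Lemma cis_add a b : (cis a * cis b)%C = cis (a + b).
Proof.
unfold cis, Cmult; simpl; rewrite cos_plus, sin_plus.
apply injective_projections; simpl; ring.
Qed.

Lemma cis_pow a k : (cis a ^ k)%C = cis (INR k * a).
Proof.
induction k as [|k IH].
- unfold cis; simpl; rewrite Rmult_0_l, cos_0, sin_0; reflexivity.
- rewrite Cpow_S, IH, cis_add, S_INR; f_equal; ring.
Qed.

Lemma cis_conj a : Cconj (cis a) = cis (- a).
Proof. unfold cis, Cconj; simpl; rewrite cos_neg, sin_neg; reflexivity. Qed.

Lemma Cmod_cis a : Cmod (cis a) = 1.
Proof.
unfold cis, Cmod; simpl.
replace (cos a * (cos a * 1) + sin a * (sin a * 1)) with 1
  by (pose proof (sin2_cos2 a); unfold Rsqr in *; lra).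
apply sqrt_1.
Qed.

Lemma cis_2kPI k : cis (2 * PI * INR k) = RtoC 1.
Proof.
unfold cis; pose proof (cos_period 0 k) as Hc; pose proof (sin_period 0 k) as Hs.
rewrite Rplus_0_l, cos_0 in Hc; rewrite Rplus_0_l, sin_0 in Hs.
replace (2 * PI * INR k) with (2 * INR k * PI) by ring; rewrite Hc, Hs; reflexivity.
Qed.

Lemma cis_neq_1 x : 0 < Rabs x < 2 * PI -> cis x <> RtoC 1.
Proof.
intros Hx Heq.
assert (Hcos : cos (Rabs x) = 1).
{ destruct (Rle_or_lt 0 x); [rewrite Rabs_right by lra|rewrite Rabs_left, cos_neg by lra];
    exact (f_equal fst Heq). }
replace (Rabs x) with (2 * (Rabs x / 2)) in Hcos by field; rewrite cos_2a_sin in Hcos.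
assert (0 < sin (Rabs x / 2)) by (apply sin_gt_0; lra).
nra.
Qed.

Lemma Csum_geometric_root (r : C) N : r <> RtoC 1 -> (r ^ N)%C = RtoC 1 ->
  Csum N (fun j => r ^ j)%C = RtoC 0.
Proof.
intros Hr HrN.
assert (Htel : ((r - 1) * Csum N (fun j => r ^ j) = r ^ N - 1)%C).
{ clear HrN; induction N as [|N IH]; simpl; [ring|].
  rewrite Cmult_plus_distr_l, IH; ring. }
rewrite HrN in Htel.
assert (Hr1 : (r - 1)%C <> RtoC 0)
  by (intros H; apply Hr; replace r with (r - 1 + 1)%C by ring; rewrite H; ring).
replace (Csum N (fun j => r ^ j))%C with (/ (r - 1) * ((r - 1) * Csum N (fun j => r ^ j)))%C
  by (field; exact Hr1).
rewrite Htel; ring.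
Qed.


Lemma Csum_cis_orthogonal d k l : (k <= d)%nat -> (l <= d)%nat ->
  Csum (S d) (fun j => cis (INR j * (2 * PI * (INR k - INR l) / INR (S d)))) =
  if Nat.eqb k l then RtoC (INR (S d)) else RtoC 0.
Proof.
intros Hk Hl.
assert (HN : 0 < INR (S d)) by (apply lt_0_INR; lia).
set (x := 2 * PI * (INR k - INR l) / INR (S d)).
rewrite (Csum_ext _ _ (fun j => cis x ^ j)%C) by (intros j _; rewrite cis_pow; reflexivity).
destruct (Nat.eqb_spec k l) as [<-|Hkl].
- replace x with 0 by (unfold x; field; lra).
  replace (cis 0) with (RtoC 1) by (unfold cis; rewrite cos_0, sin_0; reflexivity).
  generalize (S d); intros N; induction N as [|N IH]; [reflexivity|].
  simpl Csum; rewrite IH, Cpow_1_l, (S_INR N), RtoC_plus; reflexivity.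
- apply Csum_geometric_root.
  + apply cis_neq_1.
    assert (Hkl' : 0 < Rabs (INR k - INR l) < INR (S d)).
    { split; [apply Rabs_pos_lt; intros H; apply Hkl, INR_eq; lra|].
      apply Rabs_def1; rewrite S_INR;
        pose proof (le_INR _ _ Hk); pose proof (le_INR _ _ Hl); pose proof (pos_INR k);
        pose proof (pos_INR l); lra. }
    assert (Hx : Rabs x = 2 * PI * (Rabs (INR k - INR l) / INR (S d))).
    { unfold x, Rdiv; rewrite !Rabs_mult, Rabs_inv, (Rabs_right 2), (Rabs_right PI),
        (Rabs_right (INR (S d))); try lra; apply Rle_ge, Rlt_le, PI_RGT_0. }
    assert (Hratio : 0 < Rabs (INR k - INR l) / INR (S d) < 1).
    { split; [apply Rdiv_lt_0_compat; lra|].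
      apply (Rmult_lt_reg_r (INR (S d))); [lra|].
      unfold Rdiv; rewrite Rmult_assoc, Rinv_l; lra. }
    pose proof PI_RGT_0; rewrite Hx; split; nra.
  + rewrite cis_pow.
    replace (INR (S d) * x) with (2 * PI * INR k + - (2 * PI * INR l)) by (unfold x; field; lra).
    rewrite <- cis_add, <- cis_conj, !cis_2kPI.
    apply injective_projections; simpl; lra.
Qed.

Lemma trig_poly_coef_zero d (b : nat -> C) :
  (forall x, Csum (S d) (fun k => b k * cis (INR k * x))%C = RtoC 0) ->
  forall l, (l <= d)%nat -> b l = RtoC 0.
Proof.
intros H l Hl.
assert (HN : 0 < INR (S d)) by (apply lt_0_INR; lia).
set (x j := 2 * PI * INR j / INR (S d)).
assert (E : Csum (S d) (fun j => cis (- (INR l * x j)) *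
              Csum (S d) (fun k => b k * cis (INR k * x j)))%C = RtoC 0).
{ apply Csum_eq_0; intros j _; rewrite H; ring. }
rewrite (Csum_ext _ _ (fun j => Csum (S d) (fun k =>
           b k * cis (INR j * (2 * PI * (INR k - INR l) / INR (S d))))))%C in E.
2:{ intros j _; rewrite <- Csum_scal_l; apply Csum_ext; intros k _.
    replace (INR j * (2 * PI * (INR k - INR l) / INR (S d)))
      with (INR k * x j + - (INR l * x j)) by (unfold x; field; lra).
    rewrite <- cis_add; ring. }
rewrite Csum_swap in E.
rewrite (Csum_ext _ _ (fun k => if Nat.eqb k l then RtoC (INR (S d)) * b l else RtoC 0))%C in E.
2:{ intros k Hk; rewrite Csum_scal_l, Csum_cis_orthogonal by lia.
    destruct (Nat.eqb_spec k l) as [->|]; ring. }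
rewrite Csum_kronecker in E by exact Hl.
assert (HN' : RtoC (INR (S d)) <> RtoC 0)
  by (intros Heq; apply (f_equal fst) in Heq; change (INR (S d) = 0) in Heq; lra).
replace (b l) with (/ RtoC (INR (S d)) * (RtoC (INR (S d)) * b l))%C by (field; exact HN').
rewrite E; ring.
Qed.

Lemma complex_symmetric_of_real_on_circle d a :
  (forall z, Cmod z = 1 -> Im (homp d a z (Cconj z)) = 0) -> complex_symmetric d a.
Proof.
intros Hreal k Hk.
set (b j := (a j - Cconj (a (d - j)%nat))%C).
replace (a k) with (b k + Cconj (a (d - k)%nat))%C by (unfold b; ring).
rewrite (trig_poly_coef_zero d b); [ring| |exact Hk].
intros x; set (z := cis (x / 2)).
assert (Hsum : Csum (S d) (fun j => b j * z ^ j * Cconj z ^ (d - j))%C = RtoC 0).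
{ transitivity (homp d a z (Cconj z) - Cconj (homp d a z (Cconj z)))%C.
  - unfold homp; rewrite Csum_conj, (Csum_rev d (fun j => Cconj _)), <- Csum_minus.
    apply Csum_ext; intros j Hj; unfold b.
    rewrite !Cmult_conj, !Cpow_conj, Cconj_conj.
    replace (d - (d - j))%nat with j by lia; ring.
  - rewrite im_alt', Hreal by apply Cmod_cis; ring. }
rewrite (Csum_ext _ _ (fun j => cis (INR d * (x / 2)) * (b j * z ^ j * Cconj z ^ (d - j))))%C.
- rewrite Csum_scal_l, Hsum; ring.
- intros j Hj; unfold z; rewrite cis_conj, !cis_pow, minus_INR by lia.
  replace (INR j * x) with (INR d * (x / 2) + INR j * (x / 2) + (INR d - INR j) * - (x / 2))
    by field.
  rewrite <- !cis_add; ring.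
Qed.

Theorem mainTheorem4
  (g : C -> C) (m : R) (s n : nat) (c : nat -> nat -> C)
  (Hg_even : even_fun g)
  (Hg_C1 : C1_near0 g)
  (Hm : 1 < m)
  (Hg_hom : homogeneous_deg g m)
  (Hs : (1 <= s)%nat) (Hsn : (s <= n)%nat)
  (Hlead : exists k : nat, (k <= 2 * s - 1)%nat /\ c s k <> RtoC 0)
  (Hpc : polynomial_condition g (oddpoly s n c)) :
  complex_symmetric (2 * s - 1)%nat (c s) /\
  forall z : C, Cmod z = 1 ->
    0 <= Im (Cmult (homp_d2 (2 * s - 1)%nat (c s) z (Cconj z)) (g z)).
Proof.
split.
- apply complex_symmetric_of_real_on_circle; intros z Hz.
  exact (polynomial_condition_lead_real g m s n c z Hg_hom Hm Hs Hsn Hpc Hz).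
- intros z Hz; exact (polynomial_condition_lead_d2_Im_nonneg g m s n c z Hg_hom Hm Hs Hsn Hpc Hz).
Qed.
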